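(* For every $r\ge1$ and every $z\in\mathbb{C}$ with $z\ne0$, there is an algebra isomorphism $\mathcal{P}'_r(z)\cong\mathcal{P}'_r(1)$, and $\mathcal{P}'_r(1)$ is the semigroup algebra $\mathbb{C}\mathcal{P}'_r$ of the rook monoid $\mathcal{P}'_r$.
   Context: A partial permutation of $\{1,\dots,r\}$ is a bijection $d:X\to Y$ between subsets $X=\mathrm{dom}(d)$, $Y=\mathrm{im}(d)$ of $\{1,\dots,r\}$; maps are written on the right and composed by $x(d_1\circ d_2)=(xd_1)d_2$. The rook monoid $\mathcal{P}'_r$ is the monoid of all partial permutations of $\{1,\dots,r\}$ under this composition. For $z\in\mathbb{C}$, $\mathcal{P}'_r(z)$ is the algebra with basis $\mathcal{P}'_r$ and product $d_1d_2=z^{N}(d_1\circ d_2)$ with $N=r-|\mathrm{im}(d_1)\cup\mathrm{dom}(d_2)|$ (the subalgebra of the partition algebra $\mathcal{P}_r(z)$ spanned by partial permutation diagrams). *)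

From mathcomp Require Import all_boot all_algebra.
From mathcomp Require Import Rstruct.
From mathcomp Require Import complex.
Set Implicit Arguments. Unset Strict Implicit. Unset Printing Implicit Defensive.
Import GRing.Theory.
Local Open Scope ring_scope.

Definition CC : fieldType := (Rdefinitions.R)[i].

(* Partial permutations of {1..r}, encoded on 'I_r as partial maps
   x |-> Some (x d) (x in dom d) or None (x notin dom d), injective on
   their domain. *)
Definition is_pperm (r : nat) (f : {ffun 'I_r -> option 'I_r}) : bool :=
  [forall x, forall y, (f x != None) ==> (f x == f y) ==> (x == y)].

Definition pperm (r : nat) := {f : {ffun 'I_r -> option 'I_r} | is_pperm f}.

Definition pdom (r : nat) (d : pperm r) : {set 'I_r} :=
  [set x | val d x != None].
Definition pim (r : nat) (d : pperm r) : {set 'I_r} :=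
  [set y | [exists x, val d x == Some y]].

(* Composition, maps written on the right: x (d1 o d2) = (x d1) d2. *)
Definition pcomp_fun (r : nat) (d1 d2 : pperm r) : {ffun 'I_r -> option 'I_r} :=
  [ffun x => obind (val d2) (val d1 x)].

Lemma pcomp_proof (r : nat) (d1 d2 : pperm r) : is_pperm (pcomp_fun d1 d2).
Proof.
case: d1 d2 => [f1 h1] [f2 h2]; apply/forallP => x; apply/forallP => y.
apply/implyP; rewrite /pcomp_fun !ffunE /=.
case ex: (f1 x) => [a|] //= Ha; apply/implyP.
case ey: (f1 y) => [b|] /=; last by rewrite (negbTE Ha).
move=> /eqP Hab.
have Hab' : a = b.
  by apply/eqP; move/forallP: h2 => /(_ a) /forallP /(_ b);
     rewrite Ha Hab eqxx.
subst b.
by move/forallP: h1 => /(_ x) /forallP /(_ y); rewrite ex ey eqxx.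
Qed.

Definition pcomp (r : nat) (d1 d2 : pperm r) : pperm r :=
  exist (fun f => is_pperm f) (pcomp_fun d1 d2) (pcomp_proof d1 d2).

Lemma pid_proof (r : nat) : is_pperm [ffun x : 'I_r => Some x].
Proof.
by apply/forallP => x; apply/forallP => y; rewrite !ffunE /=; apply/implyP.
Qed.
Definition pid (r : nat) : pperm r := exist (fun f => is_pperm f) _ (pid_proof r).

(* Elements of P'_r(z): formal C-linear combinations of partial
   permutations, i.e. coefficient functions. *)
Definition PAlg (r : nat) := {ffun pperm r -> CC}.

Definition pbasis (r : nat) (d : pperm r) : PAlg r :=
  [ffun d' => if d' == d then 1 else 0].

Definition pexp (r : nat) (d1 d2 : pperm r) : nat :=
  (r - #|pim d1 :|: pdom d2|)%N.

Definition pbasis_mul (r : nat) (z : CC) (d1 d2 : pperm r) : PAlg r :=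
  z ^+ pexp d1 d2 *: pbasis (pcomp d1 d2).

Definition pmul (r : nat) (z : CC) (a b : PAlg r) : PAlg r :=
  \sum_(d1 : pperm r) \sum_(d2 : pperm r)
     (a d1 * b d2) *: pbasis_mul z d1 d2.

Definition punit (r : nat) : PAlg r := pbasis (pid r).

Definition monoid_mul (r : nat) (a b : PAlg r) : PAlg r :=
  \sum_(d1 : pperm r) \sum_(d2 : pperm r)
     (a d1 * b d2) *: pbasis (pcomp d1 d2).

Definition palg_iso (r : nat) (z w : CC) (phi : PAlg r -> PAlg r) : Prop :=
  [/\ bijective phi,
      (forall (c : CC) (a b : PAlg r), phi (c *: a + b) = c *: phi a + phi b),
      (forall a b : PAlg r, phi (pmul z a b) = pmul w (phi a) (phi b))
    & phi (punit r) = punit r].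

(* Rescale the basis of P'_r(z) by e_d |-> z^(r - rank d) e_d.  The exponent
   N(d1, d2) = r - |im d1 :|: dom d2| is then a coboundary: by inclusion-exclusion
   |im d1 :|: dom d2| + |im d1 :&: dom d2| = |im d1| + |dom d2|, while
   rank d1 = |im d1| and rank (d1 o d2) = |im d1 :&: dom d2|, so
   N(d1, d2) + corank (d1 o d2) = corank d1 + corank d2 and the rescaling
   turns the product of P'_r(z) into that of P'_r(1). *)
From Pilot Require Import Defs.
From mathcomp Require Import all_boot all_algebra.
From mathcomp Require Import Rstruct complex.
From mathcomp Require Import zify ring.
(* Re-imported so that [pcomp] means composition of partial permutations,
   not ssrfun's composition of partial functions. *)
Import Pilot.Defs.
Set Implicit Arguments. Unset Strict Implicit. Unset Printing Implicit Defensive.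
Import GRing.Theory.
Local Open Scope ring_scope.

Section PartialPermutations.

Variable r : nat.
Implicit Types d : pperm r.

Lemma pperm_inj d x y : val d x != None -> val d x = val d y -> x = y.
Proof.
move=> dx_def dxy; move/forallP: (valP d) => /(_ x) /forallP /(_ y).
by rewrite dx_def dxy eqxx => /eqP.
Qed.

Lemma imset_Some_pim d : Some @: pim d = val d @: pdom d.
Proof.
apply/setP => y; apply/imsetP/imsetP => [[y'] | [x]].
- by rewrite inE => /existsP [x /eqP dx] ->; exists x; rewrite ?inE dx.
- rewrite inE; case dx: (val d x) => [y'|] // _ ->.
  by exists y'; rewrite // inE; apply/existsP; exists x; rewrite dx.
Qed.

Lemma card_pim d : #|pim d| = #|pdom d|.
Proof.
rewrite -(card_imset _ (@Some_inj _)) imset_Some_pim card_in_imset //.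
by move=> x y; rewrite inE => dx_def _; apply: pperm_inj.
Qed.

Lemma imset_Some_pim_pdom d1 d2 :
  Some @: (pim d1 :&: pdom d2) = val d1 @: pdom (pcomp d1 d2).
Proof.
apply/setP => y; apply/imsetP/imsetP => [[y'] | [x]].
- rewrite !inE => /andP [/existsP [x /eqP d1x] d2y'] ->.
  by exists x; rewrite // inE /= /pcomp_fun ffunE d1x.
- rewrite inE /= /pcomp_fun ffunE; case d1x: (val d1 x) => [y'|] //= d2y' ->.
  by exists y'; rewrite // !inE d2y' andbT; apply/existsP; exists x; rewrite d1x.
Qed.

Lemma card_pdom_pcomp d1 d2 : #|pdom (pcomp d1 d2)| = #|pim d1 :&: pdom d2|.
Proof.
rewrite -[RHS](card_imset _ (@Some_inj _)) imset_Some_pim_pdom card_in_imset //.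
move=> x y; rewrite inE /= /pcomp_fun ffunE => d12x_def _.
by apply: pperm_inj; case: (val d1 x) d12x_def.
Qed.

Lemma pdom_pid : pdom (pid r) = [set: 'I_r].
Proof. by apply/setP => x; rewrite !inE ffunE. Qed.

Definition corank d : nat := (r - #|pdom d|)%N.

Lemma corank_pid : corank (pid r) = 0%N.
Proof. by rewrite /corank pdom_pid cardsT card_ord subnn. Qed.

Lemma pexp_corank d1 d2 :
  (pexp d1 d2 + corank (pcomp d1 d2) = corank d1 + corank d2)%N.
Proof.
have incl_excl := cardsUI (pim d1) (pdom d2).
rewrite -card_pdom_pcomp card_pim in incl_excl.
have le_r (A : {set 'I_r}) : (#|A| <= r)%N by rewrite -[r in (_ <= r)%N]card_ord max_card.
move: (le_r (pim d1 :|: pdom d2)) (le_r (pdom d1)) (le_r (pdom d2)).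
move: (le_r (pdom (pcomp d1 d2))); rewrite /pexp /corank; lia.
Qed.

End PartialPermutations.

Section Rescaling.

Variables (r : nat) (z w : CC) (lam : pperm r -> CC).

Hypothesis lam_cocycle : forall d1 d2,
  z ^+ pexp d1 d2 * lam (pcomp d1 d2) = w ^+ pexp d1 d2 * (lam d1 * lam d2).

Definition rescale (a : PAlg r) : PAlg r := [ffun d => lam d * a d].

Lemma rescale_pmul a b : rescale (pmul z a b) = pmul w (rescale a) (rescale b).
Proof.
apply/ffunP => d; rewrite /pmul ffunE !sum_ffunE mulr_sumr; apply: eq_bigr => d1 _.
rewrite !sum_ffunE mulr_sumr; apply: eq_bigr => d2 _.
rewrite /pbasis_mul !ffunE; case: eqP => [->|_]; last by rewrite !scaler0 mulr0.
rewrite /GRing.scale /=.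
transitivity (a d1 * b d2 * (z ^+ pexp d1 d2 * lam (pcomp d1 d2))); first ring.
by rewrite lam_cocycle; ring.
Qed.

Lemma rescale_palg_iso :
  (forall d, lam d != 0) -> lam (pid r) = 1 -> palg_iso z w rescale.
Proof.
move=> lam_neq0 lam_pid; split.
- exists (fun a : PAlg r => [ffun d => (lam d)^-1 * a d] : PAlg r) => a;
    by apply/ffunP => d; rewrite !ffunE mulrA ?mulVf ?mulfV // mul1r.
- by move=> c a b; apply/ffunP => d; rewrite !ffunE mulrDr mulrCA.
- exact: rescale_pmul.
- apply/ffunP => d; rewrite !ffunE.
  by case: eqP => [->|_]; rewrite ?lam_pid ?mulr1 ?mulr0.
Qed.

End Rescaling.

Lemma pmul1 (r : nat) (a b : PAlg r) : pmul 1 a b = monoid_mul a b.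
Proof.
apply: eq_bigr => d1 _; apply: eq_bigr => d2 _.
by rewrite /pbasis_mul expr1n scale1r.
Qed.

Theorem corollary8p7 (r : nat) (z : CC) :
  (1 <= r)%N -> z != 0 ->
  (exists phi : PAlg r -> PAlg r, palg_iso z 1 phi) /\
  (forall a b : PAlg r, pmul 1 a b = monoid_mul a b).
Proof.
move=> _ z_neq0; split; last exact: pmul1.
exists (rescale (fun d => z ^+ corank d)); apply: rescale_palg_iso.
- by move=> d1 d2; rewrite expr1n mul1r -!exprD pexp_corank.
- by move=> d; rewrite expf_neq0.
- by rewrite corank_pid.
Qed.
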